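(* If all slice categories $\mathcal{C}/X$ of a category $\mathcal{C}$ have partial map classifiers, then $\mathcal{C}$ is strongly amendable.
   Context: A category is amendable if for every morphism $t_L : L \to L'$ there is a factorization $t_L = \beta \circ t_L'$ with $t_L' : L \rightarrowtail L''$ mono and $\beta : L'' \to L'$ such that for every factorization $t_L = \alpha \circ m$ with $m : L \rightarrowtail G_L$ mono and $\alpha : G_L \to L'$ there exists $\alpha' : G_L \to L''$ with $\alpha' \circ m = t_L'$ and $\beta \circ \alpha' = \alpha$. It is strongly amendable if the factorization $(t_L',\beta)$ can be chosen so that moreover, for every such $(m,\alpha)$, the corresponding $\alpha'$ can be chosen so that $L \xleftarrow{1_L} L \xrightarrow{m} G_L$ is a pullback of $L \xrightarrow{t_L'} L'' \xleftarrow{\alpha'} G_L$. *)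

From Stdlib Require Import ProofIrrelevance.

Set Implicit Arguments.
Unset Strict Implicit.

(** Categories, with Leibniz equality of morphisms. [comp g f] is g ∘ f. *)
Record Category := {
  Obj :> Type;
  Hom : Obj -> Obj -> Type;
  idm : forall A : Obj, Hom A A;
  comp : forall A B C : Obj, Hom B C -> Hom A B -> Hom A C;
  comp_assoc : forall (A B C D : Obj) (h : Hom C D) (g : Hom B C) (f : Hom A B),
      comp h (comp g f) = comp (comp h g) f;
  comp_id_l : forall (A B : Obj) (f : Hom A B), comp (idm B) f = f;
  comp_id_r : forall (A B : Obj) (f : Hom A B), comp f (idm A) = f
}.

Arguments Hom {c} A B.
Arguments idm {c} A.
Arguments comp {c A B C} g f : rename.

Definition mono (C : Category) (A B : C) (f : Hom A B) : Prop :=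
  forall (Z : C) (g h : Hom Z A), comp f g = comp f h -> g = h.

Definition is_pullback (C : Category) (A B Z P : C)
  (f : Hom A Z) (g : Hom B Z) (p1 : Hom P A) (p2 : Hom P B) : Prop :=
  comp f p1 = comp g p2 /\
  forall (Q : C) (q1 : Hom Q A) (q2 : Hom Q B),
    comp f q1 = comp g q2 ->
    exists u : Hom Q P,
      (comp p1 u = q1 /\ comp p2 u = q2) /\
      forall v : Hom Q P, comp p1 v = q1 -> comp p2 v = q2 -> v = u.

Definition has_partial_map_classifiers (C : Category) : Prop :=
  exists (T : C -> C) (eta : forall B : C, Hom B (T B)),
    (forall B : C, mono (eta B)) /\
    forall (A B D : C) (m : Hom D A) (f : Hom D B),
      mono m ->
      exists phi : Hom A (T B),
        is_pullback phi (eta B) m f /\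
        forall psi : Hom A (T B), is_pullback psi (eta B) m f -> psi = phi.

Section Slice.
Variables (C : Category) (X : C).

Definition slice_obj := { A : C & Hom A X }.
Definition slice_hom (a b : slice_obj) :=
  { f : Hom (projT1 a) (projT1 b) | comp (projT2 b) f = projT2 a }.

Definition slice_id (a : slice_obj) : slice_hom a a :=
  exist _ (idm (projT1 a)) (comp_id_r (projT2 a)).

Lemma slice_comp_proof (a b c : slice_obj) (g : slice_hom b c) (f : slice_hom a b) :
  comp (projT2 c) (comp (proj1_sig g) (proj1_sig f)) = projT2 a.
Proof.
  destruct g as [g Hg], f as [f Hf]; simpl.
  rewrite comp_assoc, Hg; exact Hf.
Qed.

Definition slice_comp (a b c : slice_obj) (g : slice_hom b c) (f : slice_hom a b)
  : slice_hom a c :=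
  exist _ (comp (proj1_sig g) (proj1_sig f)) (slice_comp_proof g f).

Lemma slice_hom_eq (a b : slice_obj) (f g : slice_hom a b) :
  proj1_sig f = proj1_sig g -> f = g.
Proof.
  destruct f as [f Hf], g as [g Hg]; simpl; intros ->.
  f_equal; apply proof_irrelevance.
Qed.

Definition Slice : Category.
Proof.
  refine {| Obj := slice_obj; Hom := slice_hom; idm := slice_id;
            comp := slice_comp |}.
  - intros; apply slice_hom_eq; simpl; apply comp_assoc.
  - intros; apply slice_hom_eq; simpl; apply comp_id_l.
  - intros; apply slice_hom_eq; simpl; apply comp_id_r.
Defined.
End Slice.

Definition amendable (C : Category) : Prop :=
  forall (L L' : C) (tL : Hom L L'),
    exists (L'' : C) (tL' : Hom L L'') (beta : Hom L'' L'),
      mono tL' /\ comp beta tL' = tL /\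
      forall (GL : C) (m : Hom L GL) (alpha : Hom GL L'),
        mono m -> comp alpha m = tL ->
        exists alpha' : Hom GL L'',
          comp alpha' m = tL' /\ comp beta alpha' = alpha.

Definition strongly_amendable (C : Category) : Prop :=
  forall (L L' : C) (tL : Hom L L'),
    exists (L'' : C) (tL' : Hom L L'') (beta : Hom L'' L'),
      mono tL' /\ comp beta tL' = tL /\
      forall (GL : C) (m : Hom L GL) (alpha : Hom GL L'),
        mono m -> comp alpha m = tL ->
        exists alpha' : Hom GL L'',
          comp alpha' m = tL' /\ comp beta alpha' = alpha /\
          is_pullback tL' alpha' (idm L) m.

(* Regard tL as the object (L, tL) of C/L' and take for tL' its partial map
   classifier (L, tL) >-> (L'', beta) in C/L'.  A factorization tL = alpha o m
   with m mono makes m a mono (L, tL) >-> (GL, alpha) of C/L', so the partial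
   map (m, 1_L) of C/L' has a classifying map alpha' : (GL, alpha) -> (L'', beta);
   the classifying pullback square lives over L', hence is a pullback in C. *)

Lemma is_pullback_sym (C : Category) (A B Z P : C)
  (f : Hom A Z) (g : Hom B Z) (p1 : Hom P A) (p2 : Hom P B) :
  is_pullback f g p1 p2 -> is_pullback g f p2 p1.
Proof.
  intros [Hsq Huniv]; split; [symmetry; exact Hsq|].
  intros Q q2 q1 Hq.
  destruct (Huniv Q q1 q2 (eq_sym Hq)) as [u [[Hu1 Hu2] Hu]].
  exists u; split; [split; assumption|].
  intros v Hv2 Hv1; exact (Hu v Hv1 Hv2).
Qed.

Section SliceForget.
Context {C : Category} {X : C}.

Definition over {A : C} (x : Hom A X) : Slice X := existT _ A x.

Definition over_hom {A B : C} (x : Hom B X) (f : Hom A B) :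
  slice_hom (over (comp x f)) (over x) := exist _ f eq_refl.

Lemma slice_base_comp {a b : slice_obj X} (f : slice_hom a b)
  (Z : C) (g : Hom Z (projT1 a)) :
  comp (projT2 a) g = comp (projT2 b) (comp (proj1_sig f) g).
Proof. rewrite comp_assoc, (proj2_sig f); reflexivity. Qed.

Lemma slice_mono {a b : slice_obj X} {f : slice_hom a b} :
  mono (proj1_sig f) -> @mono (Slice X) a b f.
Proof.
  intros Hf Z g h Hgh; apply slice_hom_eq, Hf.
  exact (f_equal (@proj1_sig _ _) Hgh).
Qed.

Lemma mono_of_slice_mono {a b : slice_obj X} {f : slice_hom a b} :
  @mono (Slice X) a b f -> mono (proj1_sig f).
Proof.
  intros Hf Z g h Hgh.
  assert (Hh : comp (projT2 a) h = comp (projT2 a) g).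
  { rewrite !(slice_base_comp f), Hgh; reflexivity. }
  set (sg := over_hom (projT2 a) g).
  set (sh := exist _ h Hh : slice_hom (over (comp (projT2 a) g)) a).
  assert (Hs : sg = sh) by (apply Hf, slice_hom_eq; exact Hgh).
  exact (f_equal (@proj1_sig _ _) Hs).
Qed.

Lemma slice_pullback {a b z p : slice_obj X}
  {f : slice_hom a z} {g : slice_hom b z} {p1 : slice_hom p a} {p2 : slice_hom p b} :
  @is_pullback (Slice X) a b z p f g p1 p2 ->
  is_pullback (proj1_sig f) (proj1_sig g) (proj1_sig p1) (proj1_sig p2).
Proof.
  intros [Hsq Huniv]; split; [exact (f_equal (@proj1_sig _ _) Hsq)|].
  intros Q q1 q2 Hq.
  assert (Hq2 : comp (projT2 b) q2 = comp (projT2 a) q1).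
  { rewrite (slice_base_comp f), (slice_base_comp g), Hq; reflexivity. }
  set (s1 := over_hom (projT2 a) q1).
  set (s2 := exist _ q2 Hq2 : slice_hom (over (comp (projT2 a) q1)) b).
  destruct (Huniv _ s1 s2) as [u [[Hu1 Hu2] Hu]].
  { apply slice_hom_eq; exact Hq. }
  exists (proj1_sig u); split.
  - split; [exact (f_equal (@proj1_sig _ _) Hu1) | exact (f_equal (@proj1_sig _ _) Hu2)].
  - intros v Hv1 Hv2.
    assert (Hv : comp (projT2 p) v = comp (projT2 a) q1)
      by (rewrite (slice_base_comp p1), Hv1; reflexivity).
    assert (Hvu := Hu (exist _ v Hv)).
    refine (f_equal (@proj1_sig _ _) (Hvu _ _)); apply slice_hom_eq; assumption.
Qed.

End SliceForget.

Theorem proposition3 (C : Category) :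
  (forall X : C, has_partial_map_classifiers (Slice X)) ->
  strongly_amendable C.
Proof.
  intros Hclass L L' tL.
  destruct (Hclass L') as [T [eta [Heta_mono Hclassify]]].
  set (a := over tL).
  exists (projT1 (T a)), (proj1_sig (eta a)), (projT2 (T a)).
  split; [exact (mono_of_slice_mono (Heta_mono a))|].
  split; [exact (proj2_sig (eta a))|].
  intros GL m alpha Hm Hfact.
  set (sm := exist _ m Hfact : slice_hom a (over alpha)).
  destruct (Hclassify _ _ _ sm (slice_id a) (slice_mono (f := sm) Hm)) as [phi [Hpb _]].
  apply slice_pullback, is_pullback_sym in Hpb.
  exists (proj1_sig phi).
  split; [|split; [exact (proj2_sig phi) | exact Hpb]].
  destruct Hpb as [Hsq _]; rewrite comp_id_r in Hsq; symmetry; exact Hsq.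
Qed.
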